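(* For every integer $n\geq 0$, \[ \overline{C}(0,3,3n+2)=\overline{C}(1,3,3n+2)=\overline{C}(2,3,3n+2)=\frac{\overline{a}(3n+2)}{3}\equiv 0\pmod 2 . \]
   Context: An overpartition is a partition in which the first occurrence of each distinct part size may be overlined; $\ell(\pi)$ counts all parts (overlined and non-overlined). An overcubic partition of $n$ is a pair $(\pi_r,\pi_b)$ of overpartitions, with $\pi_b$ having only even parts, and total sum of parts $n$; $\overline{a}(n)$ denotes their number, so $\sum_n \overline{a}(n)q^n=\prod_{k\ge1}\frac{(1+q^k)(1+q^{2k})}{(1-q^k)(1-q^{2k})}$. The crank of such a pair is $r_c=\ell(\pi_r^{e})-\ell(\pi_b)$, where $\pi_r^{e}$ consists of the even parts of $\pi_r$. $\overline{C}(i,3,n)$ denotes the number of overcubic partitions of $n$ with $r_c\equiv i\pmod 3$. *)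

From mathcomp Require Import all_boot all_order all_algebra.
Set Implicit Arguments. Unset Strict Implicit. Unset Printing Implicit Defensive.
Import GRing.Theory Num.Theory.

(* An overpartition whose parts are at most n, in multiplicity form:
   for i : 'I_n, (f i).1 is the number of parts equal to i.+1 and
   (f i).2 says whether the first occurrence of the part i.+1 is overlined. *)
Definition ovp (n : nat) := {ffun 'I_n -> 'I_n.+1 * bool}.

Definition ovp_valid n (f : ovp n) : bool :=
  [forall i, (f i).2 ==> (0 < (f i).1)%N].

Definition ovp_weight n (f : ovp n) : nat := (\sum_(i < n) i.+1 * (f i).1)%N.

Definition ovp_len n (f : ovp n) : nat := (\sum_(i < n) (f i).1)%N.

(* number of even parts, i.e. l(pi^e); the part i.+1 is even iff i is odd *)
Definition ovp_even_len n (f : ovp n) : nat :=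
  (\sum_(i < n | odd i) (f i).1)%N.

Definition ovp_only_even n (f : ovp n) : bool :=
  [forall i : 'I_n, ~~ odd i ==> (nat_of_ord (f i).1 == 0%N)].

Definition overcubic (n : nat) (p : ovp n * ovp n) : bool :=
  [&& ovp_valid p.1, ovp_valid p.2, ovp_only_even p.2
    & ovp_weight p.1 + ovp_weight p.2 == n]%N.

Definition abar (n : nat) : nat := #|[set p : ovp n * ovp n | overcubic p]|.

Definition crank n (p : ovp n * ovp n) : int :=
  ((ovp_even_len p.1)%:Z - (ovp_len p.2)%:Z)%R.

Definition Cbar (i : int) (m n : nat) : nat :=
  #|[set p : ovp n * ovp n | overcubic p & (crank p == i %[mod m%:Z])%Z]|.

(* Let w be a primitive cube root of unity and weight an overcubic partition by
   w^crank.  A part size k contributes (1 + q^k)/(1 - q^k) when k is odd and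
   (1 + w q^k)(1 + w^2 q^k) / ((1 - w q^k)(1 - w^2 q^k))
     = (1 - q^k)(1 + q^3k) / ((1 + q^k)(1 - q^3k))
   when k is even, so the generating function is
   prod_k (1 - (-q)^k)/(1 + (-q)^k) * prod_(k even) (1 + q^3k)/(1 - q^3k).
   By Gauss's identity (a consequence of the Jacobi triple product, obtained here
   from the q-binomial theorem) the first product is sum_(m in Z) q^(m^2), and the
   second is a series in q^3.  As squares are never 2 mod 3, the coefficient of
   q^(3n+2) vanishes: C0 + C1 w + C2 w^2 = 0, which forces C0 = C1 = C2.  At w = 1
   every factor is 1 modulo 2, so abar(3n+2) = 3 C2 is even and so is C2.
   Power series are represented by polynomials, compared modulo X^(N+1). *)

From mathcomp Require Import all_boot all_order all_algebra algC.
From mathcomp Require Import ring zify.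
Set Implicit Arguments. Unset Strict Implicit. Unset Printing Implicit Defensive.
Import GRing.Theory Num.Theory.
Local Open Scope ring_scope.

Notation "p = q %[modX n ]" := (take_poly n%N p = take_poly n%N q)
  (at level 70, q at next level, format "p  =  q  %[modX  n ]") : ring_scope.

Section CongruenceModXn.
Variable R : nzRingType.
Implicit Types (p q d : {poly R}) (m n : nat).

Lemma eqmodXP n p q :
  p = q %[modX n] <-> (forall j, (j < n)%N -> p`_j = q`_j).
Proof.
split=> [pq j lt_jn | pq]; last first.
  by apply/polyP => j; rewrite !coef_take_poly; case: ifP => // /pq.
have := congr1 (fun s : {poly R} => s`_j) pq.
by rewrite /= !coef_take_poly lt_jn.
Qed.

Lemma eqmodX_le m n p q : (m <= n)%N -> p = q %[modX n] -> p = q %[modX m].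
Proof.
by move=> le_mn /eqmodXP pq; apply/eqmodXP => j lt_jm; rewrite pq // (leq_trans lt_jm).
Qed.

Lemma eqmodXD n p p' q q' :
  p = p' %[modX n] -> q = q' %[modX n] -> p + q = p' + q' %[modX n].
Proof. by rewrite !take_polyD => -> ->. Qed.

Lemma eqmodXM n p p' q q' :
  p = p' %[modX n] -> q = q' %[modX n] -> p * q = p' * q' %[modX n].
Proof.
move=> /eqmodXP pp' /eqmodXP qq'; apply/eqmodXP => j lt_jn.
rewrite !coefM; apply: eq_bigr => i _.
by rewrite pp' ?qq' ?(leq_ltn_trans _ lt_jn) ?leq_subr // -ltnS.
Qed.

Lemma eqmodX_sum n I (s : seq I) (P : pred I) (F G : I -> {poly R}) :
  (forall i, P i -> F i = G i %[modX n]) ->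
  \sum_(i <- s | P i) F i = \sum_(i <- s | P i) G i %[modX n].
Proof.
by move=> FG; apply: (big_ind2 (fun a b => a = b %[modX n])) => //; apply: eqmodXD.
Qed.

Lemma eqmodX_prod n I (s : seq I) (P : pred I) (F G : I -> {poly R}) :
  (forall i, P i -> F i = G i %[modX n]) ->
  \prod_(i <- s | P i) F i = \prod_(i <- s | P i) G i %[modX n].
Proof.
by move=> FG; apply: (big_ind2 (fun a b => a = b %[modX n])) => //; apply: eqmodXM.
Qed.

Lemma eqmodX_addXn m n p q : (n <= m)%N -> p + 'X^m * q = p %[modX n].
Proof.
move=> le_nm; apply/eqmodXP => j lt_jn.
by rewrite coefD coefXnM (leq_trans lt_jn le_nm) addr0.
Qed.

Lemma eqmodX_mulXn e n p q :
  p = q %[modX n] -> 'X^e * p = 'X^e * q %[modX n + e].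
Proof.
move=> /eqmodXP pq; apply/eqmodXP => j lt_j; rewrite !coefXnM; case: ltnP => // le_ej.
by rewrite pq // ltn_subLR // addnC.
Qed.

Lemma eqmodX_mul2r n p q d :
  d`_0 = 1 -> p * d = q * d %[modX n] -> p = q %[modX n].
Proof.
move=> d0; elim: n => [|n IH] pdqd; first by apply/eqmodXP.
have /eqmodXP {}IH := IH (eqmodX_le (leqnSn n) pdqd).
apply/eqmodXP => j; rewrite ltnS leq_eqVlt => /orP[/eqP-> | lt_jn]; last exact: IH.
move/eqmodXP/(_ n (ltnSn n)): pdqd; rewrite !coefM !big_ord_recr /= subnn d0 !mulr1.
under eq_bigr => i _ do rewrite IH //.
exact: addrI.
Qed.

Lemma eqmodX_prod_widen n m k (F : nat -> {poly R}) : (m <= k)%N ->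
  (forall i, (m <= i < k)%N -> F i = 1 %[modX n]) ->
  \prod_(i < k) F i = \prod_(i < m) F i %[modX n].
Proof.
elim: k => [|k IH]; first by rewrite leqn0 => /eqP->.
rewrite leq_eqVlt ltnS => /orP[/eqP-> // | le_mk] F1.
rewrite big_ord_recr /= -[X in _ = X %[modX _]]mulr1; apply: eqmodXM.
  by apply: IH => // i /andP[le_mi lt_ik]; apply: F1; rewrite le_mi ltnW.
by apply: F1; rewrite le_mk /=.
Qed.

End CongruenceModXn.

(* Truncation of (1 + u)/(1 - u) = sum_a (0 < a).+1 u^a: a part size occurring
   a > 0 times may have its first occurrence overlined or not. *)
Definition ovser (R : nzRingType) N (u : R) : R :=
  \sum_(a < N.+1) u ^+ a *+ (0 < a).+1.

Lemma ovser0 (R : nzRingType) N : ovser N (0 : R) = 1.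
Proof.
by rewrite /ovser big_ord_recl big1 ?addr0 // => i _; rewrite expr0n mul0rn.
Qed.

Lemma mulr_ovser (R : comNzRingType) N (u : R) :
  (1 - u) * ovser N u = 1 + u - u ^+ N.+1 *+ 2.
Proof.
elim: N => [|N IH]; first by rewrite /ovser big_ord1 /=; ring.
by rewrite /ovser big_ord_recr /= mulrDr IH !exprS; ring.
Qed.

Lemma eqmodX_ovser (R : comNzRingType) N (a : {poly R}) k : (0 < k)%N ->
  (1 - a * 'X^k) * ovser N (a * 'X^k) = 1 + a * 'X^k %[modX N.+1].
Proof.
move=> k_gt0; rewrite mulr_ovser.
have -> : 1 + a * 'X^k - (a * 'X^k) ^+ N.+1 *+ 2 =
          1 + a * 'X^k + 'X^(k * N.+1) * - (a ^+ N.+1 *+ 2).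
  by rewrite exprMn -exprM; ring.
by apply: eqmodX_addXn; rewrite leq_pmull.
Qed.

Fixpoint qbin (R : nzRingType) (t : R) n k : R :=
  match n, k with
  | _, 0 => 1
  | 0, _.+1 => 0
  | n.+1, k.+1 => qbin t n k + t ^+ k.+1 * qbin t n k.+1
  end.

Definition qpoch (R : nzRingType) (t : R) n : R := \prod_(j < n) (1 - t ^+ j.+1).

Definition qpochD (R : nzRingType) (t : R) n : R := \prod_(j < n) (1 + t ^+ j.+1).

Section GaussianBinomials.
Variable R : comNzRingType.
Implicit Types t x y : R.

Lemma qbin_n0 t n : qbin t n 0 = 1.
Proof. by case: n. Qed.

Lemma qbin_small t n k : (n < k)%N -> qbin t n k = 0.
Proof.
elim: n k => [|n IH] [|k] //= lt_nk.
by rewrite !IH ?mulr0 ?addr0 // ltnW.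
Qed.

Lemma qbin_nn t n : qbin t n n = 1.
Proof. by elim: n => //= n ->; rewrite qbin_small ?mulr0 ?addr0. Qed.

Lemma qpoch0 t : qpoch t 0 = 1.
Proof. exact: big_ord0. Qed.

Lemma qpochS t n : qpoch t n.+1 = qpoch t n * (1 - t ^+ n.+1).
Proof. exact: big_ord_recr. Qed.

Lemma qbin_qpoch t n k :
  (k <= n)%N -> qbin t n k * qpoch t k * qpoch t (n - k) = qpoch t n.
Proof.
elim: n k => [|n IH] [|k] le_kn; rewrite ?qbin_n0 ?qpoch0 ?subn0 ?mul1r //=.
rewrite subSS; move: le_kn; rewrite ltnS leq_eqVlt.
case/orP=> [/eqP-> | lt_kn].
  by rewrite qbin_nn qbin_small // subnn qpoch0 mulr0 addr0 !mul1r mulr1.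
have [m def_n] : exists m, n = (k + m).+1%N.
  by exists (n - k.+1)%N; rewrite -addSn subnKC.
have [e1 e2] : (n - k = m.+1 /\ n - k.+1 = m)%N by rewrite def_n; lia.
have IHk := IH k (ltnW lt_kn); have IHk1 := IH k.+1 lt_kn.
rewrite e1 in IHk *; rewrite e2 in IHk1.
transitivity ((1 - t ^+ k.+1) * (qbin t n k * qpoch t k * qpoch t m.+1) +
    t ^+ k.+1 * (1 - t ^+ m.+1) * (qbin t n k.+1 * qpoch t k.+1 * qpoch t m)).
  by rewrite !qpochS; ring.
have tn : t ^+ n.+1 = t ^+ k.+1 * t ^+ m.+1 by rewrite -exprD def_n addnS addSn.
by rewrite IHk IHk1 qpochS tn; ring.
Qed.

Lemma qbinomial t x y n :
  \prod_(j < n) (y + x * t ^+ j) =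
  \sum_(k < n.+1) qbin t n k * t ^+ 'C(k, 2) * x ^+ k * y ^+ (n - k).
Proof.
elim: n x => [|n IH] x; first by rewrite big_ord0 big_ord1 /= !expr0 !mul1r.
rewrite big_ord_recl expr0 mulr1.
under eq_bigr => j _ do rewrite exprS mulrA.
pose a k := qbin t n k * t ^+ 'C(k, 2) * (x * t) ^+ k * y ^+ (n - k).
rewrite IH -/(\sum_(k < n.+1) a k).
have a_recl : \sum_(k < n.+2) a k = y ^+ n + \sum_(k < n.+1) a k.+1.
  by rewrite big_ord_recl /a /= qbin_n0 subn0 !expr0 !mul1r.
have a_recr : \sum_(k < n.+2) a k = \sum_(k < n.+1) a k.
  by rewrite big_ord_recr /= {2}/a qbin_small // !mul0r addr0.
have term (k : 'I_n.+1) : qbin t n.+1 (bump 0 k) * t ^+ 'C(bump 0 k, 2) *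
    x ^+ bump 0 k * y ^+ (n.+1 - bump 0 k) = x * a k + y * a k.+1.
  rewrite /bump add1n subSS /a /= binS bin1 exprD !exprMn; move: ('C(k, 2)) => c.
  case: (ltnP k n) => [lt_kn | le_nk]; last first.
    have -> : nat_of_ord k = n by have := ltn_ord k; lia.
    by rewrite (qbin_small _ (ltnSn n)) subnn !(mulr0, mul0r, addr0) !exprS; ring.
  by rewrite -(subnSK lt_kn) !exprS; ring.
rewrite [RHS]big_ord_recl (eq_bigr _ (fun k _ => term k)) /= subn0 !expr0 !mul1r.
by rewrite big_split /= -!mulr_sumr -a_recr a_recl exprS; ring.
Qed.

End GaussianBinomials.

Lemma double_bin2 k : ('C(k, 2)).*2 = (k * k.-1)%N.
Proof. by elim: k => // k IH; rewrite binS bin1 doubleD IH; case: k {IH} => //= k; lia. Qed.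

Lemma sum_odd r : (\sum_(j < r) j.*2.+1 = r ^ 2)%N.
Proof. by elim: r => [|r IH]; rewrite ?big_ord0 // big_ord_recr /= IH; lia. Qed.

(* Gauss's theta series sum_(|m| <= r) X^(m^2), with m = k - r. *)
Definition theta (R : nzRingType) r : {poly R} := \sum_(k < r.*2.+1) 'X^(`|k - r| ^ 2).

Section FiniteJacobi.
Variable R : comNzRingType.

Definition odd_qpochD r : {poly R} := \prod_(j < r) (1 + 'X^(j.*2.+1)).

Lemma prod_X2rD_Xodd r :
  \prod_(j < r.*2) ('X^(r.*2) + 'X^(j.*2.+1)) = 'X^(3 * r ^ 2) * odd_qpochD r ^+ 2 :> {poly R}.
Proof.
rewrite -addnn big_split_ord /=.
rewrite (eq_bigr (fun i : 'I_r => 'X^(i.*2.+1) * (1 + 'X^((r - i.+1).*2.+1)))); last first.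
  move=> i _; rewrite mulrDr mulr1 -exprD addrC; congr (_ + 'X^_).
  by have := ltn_ord i; lia.
rewrite [X in _ * X](eq_bigr (fun i : 'I_r => 'X^(r + r) * (1 + 'X^(i.*2.+1)))); last first.
  by move=> i _; rewrite mulrDr mulr1 -exprD; congr (_ + 'X^_); rewrite /=; lia.
rewrite !big_split /= prodrXr sum_odd prodr_const card_ord -exprM.
have -> : \prod_(i < r) (1 + 'X^((r - i.+1).*2.+1)) = odd_qpochD r.
  rewrite /odd_qpochD -(big_mkord xpredT (fun j => 1 + 'X^(j.*2.+1))).
  by rewrite big_rev_mkord subn0.
by rewrite mulrACA -exprD; congr ('X^_ * _); lia.
Qed.

(* A finite form of the Jacobi triple product. *)
Lemma odd_qpochD_sqr r :
  odd_qpochD r ^+ 2 = \sum_(k < r.*2.+1) qbin ('X^2) r.*2 k * 'X^(`|k - r| ^ 2).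
Proof.
apply: (monic_lreg (monicXn R (3 * r ^ 2))); rewrite /= -prod_X2rD_Xodd mulr_sumr.
have := qbinomial ('X^2 : {poly R}) 'X ('X^(r.*2)) r.*2.
under eq_bigr => j _ do rewrite -exprM -exprS mul2n.
move=> ->; apply: eq_bigr => k _.
rewrite -!exprM -!mulrA -!exprD [RHS]mulrCA -exprD; congr (_ * 'X^_).
by have := double_bin2 k; have := ltn_ord k; nia.
Qed.

End FiniteJacobi.

Lemma big_ord_double (R : Type) (idx : R) (op : Monoid.com_law idx) r (F : nat -> R) :
  \big[op/idx]_(i < r.*2) F i =
  op (\big[op/idx]_(i < r) F i.*2) (\big[op/idx]_(i < r) F i.*2.+1).
Proof.
elim: r => [|r IH]; first by rewrite !big_ord0 Monoid.mulm1.
by rewrite doubleS !big_ord_recr /= IH !Monoid.mulmA; congr (op _ _); rewrite Monoid.mulmAC.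
Qed.

Lemma qpochD_qpoch (R : comNzRingType) (t : R) n :
  qpochD t n * qpoch t n = qpoch (t ^+ 2) n.
Proof.
by rewrite -big_split; apply: eq_bigr => j _ /=; rewrite exprAC; move: (t ^+ j.+1) => u; ring.
Qed.

Section ThetaProduct.
Variable R : comNzRingType.
Implicit Types t : {poly R}.

Lemma negX_exp i : (- 'X : {poly R}) ^+ i = (- 1) ^+ odd i * 'X^i.
Proof. by rewrite [LHS]exprNn signr_odd. Qed.

Lemma coef0_qpoch t n : t`_0 = 0 -> (qpoch t n)`_0 = 1.
Proof.
by move=> t0; rewrite coef0_prod big1 // => j _; rewrite coefB coef1 exprS coef0M t0 mul0r subr0.
Qed.

Lemma coef0_qpochD t n : t`_0 = 0 -> (qpochD t n)`_0 = 1.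
Proof.
by move=> t0; rewrite coef0_prod big1 // => j _; rewrite coefD coef1 exprS coef0M t0 mul0r addr0.
Qed.

Lemma eqmodX_qpochXn d a b : (a <= b)%N ->
  qpoch ('X^d : {poly R}) b = qpoch 'X^d a %[modX d * a.+1].
Proof.
move=> le_ab; apply: (eqmodX_prod_widen (F := fun j => 1 - 'X^d ^+ j.+1)) => // j /andP[le_aj _].
by rewrite -exprM -mulrN1; apply: eqmodX_addXn; rewrite leq_mul2l ltnS le_aj orbT.
Qed.

Lemma eqmodX_qbin_qpoch n k : (k <= n)%N ->
  qbin ('X^2 : {poly R}) n k * qpoch 'X^2 n = 1 %[modX 2 * (minn k (n - k)).+1].
Proof.
move=> le_kn; apply: (eqmodX_mul2r (d := qpoch 'X^2 n)).
  by apply: coef0_qpoch; rewrite coefXn.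
rewrite mul1r -{3}(qbin_qpoch _ le_kn) -!mulrA; apply: eqmodXM => //.
apply: eqmodXM.
  by apply: (eqmodX_le _ (eqmodX_qpochXn 2 le_kn)); rewrite leq_mul2l ltnS geq_minl.
apply: (eqmodX_le _ (eqmodX_qpochXn 2 (leq_subr k n))).
by rewrite leq_mul2l ltnS geq_minr.
Qed.

Lemma eqmodX_odd_qpochD_sqr r :
  odd_qpochD R r ^+ 2 * qpoch 'X^2 r.*2 = theta R r %[modX r.*2.+1].
Proof.
rewrite odd_qpochD_sqr mulr_suml; apply: eqmodX_sum => k _.
rewrite mulrAC mulrC -[X in _ = X %[modX _]]mulr1.
have le_k2r : (k <= r.*2)%N by rewrite -ltnS.
apply: (eqmodX_le _ (eqmodX_mulXn _ (eqmodX_qbin_qpoch le_k2r))).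
by have := ltn_ord k; nia.
Qed.

Lemma qpoch_negX_double r :
  qpoch (- 'X : {poly R}) r.*2 = odd_qpochD R r * qpoch 'X^2 r.
Proof.
rewrite /qpoch (big_ord_double _ r (fun i => 1 - (- 'X) ^+ i.+1)) /=.
congr (_ * _); apply: eq_bigr => j _; rewrite exprNn -signr_odd /= odd_double /=.
  by rewrite expr1 mulN1r opprK.
by rewrite expr0 mul1r -exprM mul2n doubleS.
Qed.

Lemma eqmodX_theta_qpochD_double r :
  theta R r * qpochD (- 'X) r.*2 = qpoch (- 'X) r.*2 %[modX r.*2.+1].
Proof.
(* Multiply by (-X;-X)_2r = odd_qpochD r * (X^2;X^2)_r: the left side becomes
   theta (X^2;X^2)_2r, i.e. odd_qpochD r ^ 2 * (X^2;X^2)_2r ^ 2, and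
   (X^2;X^2)_2r = (X^2;X^2)_r modulo X^(2r+1). *)
apply: (eqmodX_mul2r (d := qpoch (- 'X) r.*2)).
  by apply: coef0_qpoch; rewrite coefN coefX oppr0.
rewrite -mulrA qpochD_qpoch sqrrN qpoch_negX_double.
have q2r : qpoch ('X^2 : {poly R}) r.*2 = qpoch 'X^2 r %[modX r.*2.+1].
  by apply: (eqmodX_le _ (eqmodX_qpochXn 2 _)); rewrite ?mul2n // -addnn leq_addr.
apply: (etrans (eqmodXM (esym (eqmodX_odd_qpochD_sqr r)) q2r)).
have -> : odd_qpochD R r * qpoch 'X^2 r * (odd_qpochD R r * qpoch 'X^2 r) =
          odd_qpochD R r ^+ 2 * qpoch 'X^2 r * qpoch 'X^2 r by ring.
exact: eqmodXM (eqmodXM erefl q2r) erefl.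
Qed.

Lemma eqmodX_theta_qpochD N :
  theta R N * qpochD (- 'X) N = qpoch (- 'X) N %[modX N.+1].
Proof.
have le_N2N : (N <= N.*2)%N by rewrite -addnn leq_addr.
have widenD : qpochD (- 'X : {poly R}) N = qpochD (- 'X) N.*2 %[modX N.+1].
  symmetry; apply: (eqmodX_prod_widen (F := fun j => 1 + (- 'X) ^+ j.+1)) => //.
  by move=> j /andP[le_Nj _] /=; rewrite negX_exp mulrC; apply: eqmodX_addXn.
have widen : qpoch (- 'X : {poly R}) N.*2 = qpoch (- 'X) N %[modX N.+1].
  apply: (eqmodX_prod_widen (F := fun j => 1 - (- 'X) ^+ j.+1)) => //.
  by move=> j /andP[le_Nj _] /=; rewrite negX_exp mulrC -mulrN; apply: eqmodX_addXn.
have theta2N : theta R N * qpochD (- 'X) N.*2 = qpoch (- 'X) N.*2 %[modX N.+1].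
  by apply: (eqmodX_le _ (eqmodX_theta_qpochD_double N)); rewrite ltnS.
by rewrite (eqmodXM (erefl (take_poly _ (theta R N))) widenD) theta2N widen.
Qed.

End ThetaProduct.

Section CubeRootFactorization.
Variables (R : comNzRingType) (w : R).
Hypothesis w2D : w ^+ 2 + w + 1 = 0.

Lemma cube_root_prodB x : (1 - w * x) * (1 - w ^+ 2 * x) * (1 - x) = 1 - x ^+ 3.
Proof.
have -> : (1 - w * x) * (1 - w ^+ 2 * x) * (1 - x) =
  1 - x ^+ 3 + (w ^+ 2 + w + 1) * (- x + w * x ^+ 2 - (w - 1) * x ^+ 3) by ring.
by rewrite w2D mul0r addr0.
Qed.

Lemma cube_root_prodD x : (1 + w * x) * (1 + w ^+ 2 * x) * (1 + x) = 1 + x ^+ 3.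
Proof.
have -> : (1 + w * x) * (1 + w ^+ 2 * x) * (1 + x) =
  1 + x ^+ 3 + (w ^+ 2 + w + 1) * (x + w * x ^+ 2 + (w - 1) * x ^+ 3) by ring.
by rewrite w2D mul0r addr0.
Qed.

Lemma cube_root_expr3 : w ^+ 3 = 1.
Proof. by rewrite -[RHS]addr0 -(mulr0 (w - 1)) -w2D; ring. Qed.

End CubeRootFactorization.

(* The factor of part size i.+1: w marks even parts of pi_r, and w^2 = w^-1 marks
   parts of pi_b, whose odd parts are excluded by the coefficient 0. *)
Definition crank_factor (R : nzRingType) (w : R) N i : {poly R} :=
  ovser N ((w ^+ odd i)%:P * 'X^(i.+1)) *
  ovser N ((if odd i then w ^+ 2 else 0)%:P * 'X^(i.+1)).

Definition cube_factor (R : nzRingType) N i : {poly R} :=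
  if odd i then ovser N ('X^(3 * i.+1)) else 1.

Definition cube_num (R : nzRingType) i : {poly R} :=
  if odd i then 1 + 'X^(3 * i.+1) else 1.

Definition cube_den (R : nzRingType) i : {poly R} :=
  if odd i then 1 - 'X^(3 * i.+1) else 1.

Section LocalFactors.
Variables (R : comNzRingType) (w : R).
Hypothesis w2D : w ^+ 2 + w + 1 = 0.

Lemma eqmodX_cube_factor N i :
  cube_factor R N i * cube_den R i = cube_num R i %[modX N.+1].
Proof.
rewrite /cube_factor /cube_den /cube_num; case: (odd i); last by rewrite mulr1.
by rewrite mulrC; have := @eqmodX_ovser R N 1 (3 * i.+1); rewrite !mul1r; apply.
Qed.

Lemma eqmodX_crank_factor N i :
  crank_factor w N i * ((1 + (- 'X) ^+ i.+1) * cube_den R i) =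
  (1 - (- 'X) ^+ i.+1) * cube_num R i %[modX N.+1].
Proof.
rewrite /crank_factor /cube_den /cube_num negX_exp (mulnC 3) exprM /=.
set x : {poly R} := 'X^(i.+1).
have wP : w%:P ^+ 2 + w%:P + 1 = 0 :> {poly R} by rewrite -polyC_exp -!polyCD w2D.
have ovserE (a : {poly R}) : (1 - a * x) * ovser N (a * x) = 1 + a * x %[modX N.+1].
  exact: eqmodX_ovser.
case: (odd i) => /=.
  rewrite expr1 expr0 mul1r -(cube_root_prodB wP) -(cube_root_prodD wP) polyC_exp.
  set u := ovser N _; set v := ovser N _.
  have -> : u * v * ((1 + x) * ((1 - w%:P * x) * (1 - w%:P ^+ 2 * x) * (1 - x))) =
            ((1 - w%:P * x) * u) * ((1 - w%:P ^+ 2 * x) * v) * ((1 + x) * (1 - x)) by ring.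
  have -> : (1 - x) * ((1 + w%:P * x) * (1 + w%:P ^+ 2 * x) * (1 + x)) =
            (1 + w%:P * x) * (1 + w%:P ^+ 2 * x) * ((1 + x) * (1 - x)) by ring.
  exact: eqmodXM (eqmodXM (ovserE _) (ovserE _)) erefl.
rewrite expr0 polyC1 polyC0 !mul0r ovser0 !mulr1 !mulN1r opprK mulrC.
by have := ovserE 1; rewrite !mul1r.
Qed.

Lemma eqmodX_crank_gf_theta N :
  \prod_(i < N) crank_factor w N i =
  theta R N * \prod_(i < N) cube_factor R N i %[modX N.+1].
Proof.
pose D := qpochD (- 'X) N * \prod_(i < N) cube_den R i.
apply: (eqmodX_mul2r (d := D)).
  rewrite coef0M coef0_qpochD ?coefN ?coefX ?oppr0 // mul1r coef0_prod big1 // => i _.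
  rewrite /cube_den; case: (odd i); last by rewrite coef1.
  by rewrite coefB coef1 coefXn [(0 == 3 * _)%N]eq_sym muln_eq0 subr0.
have lhs : \prod_(i < N) crank_factor w N i * D =
           qpoch (- 'X) N * \prod_(i < N) cube_num R i %[modX N.+1].
  rewrite /D /qpochD -!big_split; apply: eqmodX_prod => i _.
  exact: eqmodX_crank_factor.
have rhs : theta R N * \prod_(i < N) cube_factor R N i * D =
           theta R N * qpochD (- 'X) N * \prod_(i < N) cube_num R i %[modX N.+1].
  rewrite /D mulrACA -big_split /=.
  by apply: eqmodXM => //; apply: eqmodX_prod => i _; exact: eqmodX_cube_factor.
by rewrite lhs rhs (eqmodXM (eqmodX_theta_qpochD R N) erefl).
Qed.

End LocalFactors.

(* A natural representative of the crank modulo 3: e - l = (e + 2 l) - 3 l. *)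
Definition crank_weight N (p : ovp N * ovp N) : nat :=
  (ovp_even_len p.1 + 2 * ovp_len p.2)%N.

Section OvercubicGF.
Variables (R : comNzRingType) (N : nat).
Implicit Types (c : R) (f g : ovp N).

Definition ovp_mono c (i : 'I_N) (x : 'I_N.+1 * bool) : {poly R} :=
  if x.2 ==> (0 < x.1)%N then (c ^+ x.1)%:P * 'X^(i.+1 * x.1) else 0.

Lemma sum_ovp_mono c i : \sum_x ovp_mono c i x = ovser N (c%:P * 'X^(i.+1)).
Proof.
rewrite -(pair_bigA _ (fun a b => ovp_mono c i (a, b))); apply: eq_bigr => a _.
rewrite big_bool /ovp_mono /=.
rewrite exprMn -polyC_exp -exprM mulnC.
by case: (0 < a)%N; rewrite ?add0r ?mulr2n.
Qed.

Lemma prod_ovp_mono (c : 'I_N -> R) f :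
  \prod_i ovp_mono (c i) i (f i) =
  if ovp_valid f then (\prod_i c i ^+ (f i).1)%:P * 'X^(ovp_weight f) else 0.
Proof.
case: (boolP (ovp_valid f)) => [/forallP valid | /forallPn[i invalid]].
  under eq_bigr => i _ do rewrite /ovp_mono valid.
  by rewrite big_split /= rmorph_prod prodrXr.
by rewrite (bigD1 i) //= /ovp_mono (negbTE invalid) mul0r.
Qed.

Lemma prod_exp_odd c f : \prod_(i < N) (c ^+ odd i) ^+ (f i).1 = c ^+ ovp_even_len f.
Proof.
rewrite /ovp_even_len [in RHS]big_mkcond -prodrXr; apply: eq_bigr => i _.
by rewrite -exprM; case: (odd i); rewrite ?mul0n ?expr0 ?mul1n.
Qed.

Lemma prod_exp_even c g :
  \prod_(i < N) (if odd i then c else 0) ^+ (g i).1 =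
  if ovp_only_even g then c ^+ ovp_len g else 0.
Proof.
case: (boolP (ovp_only_even g)) => [/forallP even_g | /forallPn[i odd_gi]].
  rewrite /ovp_len -prodrXr; apply: eq_bigr => i _.
  by case: (boolP (odd i)) => // even_i; move: (even_g i); rewrite even_i => /eqP->.
rewrite negb_imply in odd_gi; case/andP: odd_gi => /negbTE even_i gi_gt0.
by rewrite (bigD1 i) //= even_i expr0n (negbTE gi_gt0) mul0r.
Qed.

Lemma crank_gf_coef c :
  \sum_(p : ovp N * ovp N | overcubic p) c ^+ crank_weight p =
  (\prod_(i < N) crank_factor c N i)`_N.
Proof.
have -> : \prod_(i < N) crank_factor c N i =
    (\prod_(i < N) \sum_x ovp_mono (c ^+ odd i) i x) *
    (\prod_(i < N) \sum_x ovp_mono (if odd i then c ^+ 2 else 0) i x).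
  by rewrite -big_split; apply: eq_bigr => i _; rewrite !sum_ovp_mono.
rewrite !bigA_distr_bigA big_distrlr pair_bigA coef_sum [LHS]big_mkcond.
apply: eq_bigr => -[f g] _ /=.
rewrite !prod_ovp_mono prod_exp_odd prod_exp_even /overcubic /crank_weight /=.
case: (ovp_valid f); last by rewrite mul0r coef0.
case: (ovp_valid g); case: (ovp_only_even g); rewrite ?polyC0 ?mul0r ?mulr0 ?coef0 //=.
rewrite -exprM mulrACA -polyCM -!exprD coefCM coefXn eq_sym.
by case: eqP; rewrite ?mulr1 ?mulr0.
Qed.

End OvercubicGF.

Lemma crank_mod3 N (p : ovp N * ovp N) (j : 'I_3) :
  (crank p == (j : nat)%:Z %[mod 3])%Z = (crank_weight p %% 3 == j)%N.
Proof.
rewrite /crank /crank_weight.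
have -> : (ovp_even_len p.1)%:Z - (ovp_len p.2)%:Z =
          - (ovp_len p.2)%:Z * 3 + (ovp_even_len p.1 + 2 * ovp_len p.2)%N :> int.
  by rewrite PoszD PoszM; ring.
by rewrite modzMDl !modz_nat (modn_small (ltn_ord j)) eqz_nat.
Qed.

Lemma sum_crank_weight_Cbar (R : comNzRingType) (w : R) N : w ^+ 3 = 1 ->
  \sum_(p : ovp N * ovp N | overcubic p) w ^+ crank_weight p =
  \sum_(j < 3) (Cbar j 3 N)%:R * w ^+ j.
Proof.
move=> w3; pose key (p : ovp N * ovp N) : 'I_3 :=
  Ordinal (ltn_pmod (crank_weight p) (isT : 0 < 3)%N).
rewrite (partition_big key xpredT) //=; apply: eq_bigr => j _.
rewrite /Cbar -sum1dep_card natr_sum mulr_suml; apply: eq_big => [p | p /andP[_ /eqP kpj]].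
  by rewrite crank_mod3.
by rewrite mul1r (divn_eq (crank_weight p) 3) exprD mulnC exprM w3 expr1n mul1r -kpj.
Qed.

Lemma sumr_overcubic_const (V : nmodType) (x : V) N :
  \sum_(p : ovp N * ovp N | overcubic p) x = x *+ abar N.
Proof. by rewrite sumr_const; congr (_ *+ _); apply: eq_card => p; rewrite inE. Qed.

Lemma abar_Cbar N : abar N = (Cbar 0 3 N + Cbar 1 3 N + Cbar 2 3 N)%N.
Proof.
move: (sum_crank_weight_Cbar (w := 1 : int) N (expr1n _ _)).
under eq_bigr do rewrite expr1n.
rewrite sumr_overcubic_const !big_ord_recr big_ord0 /= add0r !expr1n !mulr1 -!natrD.
by move/eqP; rewrite eqr_nat => /eqP.
Qed.

Lemma cube_root_nat_comb_eq (R : numDomainType) (w : R) (c0 c1 c2 : nat) :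
  w ^+ 2 + w + 1 = 0 -> c0%:R + c1%:R * w + c2%:R * w ^+ 2 = 0 :> R ->
  c0 = c1 /\ c1 = c2.
Proof.
move=> w2D c_eq0.
have : (c0 * c0 + c1 * c1 + c2 * c2)%N%:R = (c0 * c1 + c1 * c2 + c2 * c0)%N%:R :> R.
  apply/eqP; rewrite -subr_eq0; apply/eqP.
  transitivity ((c0%:R + c1%:R * w + c2%:R * w ^+ 2) * (c0%:R + c1%:R * w ^+ 2 + c2%:R * w)
    - (w ^+ 2 + w + 1) * ((c0 * c1 + c1 * c2 + c2 * c0)%N%:R
        + ((c1 * c1 + c2 * c2)%N%:R + (c1 * c2)%N%:R * w) * (w - 1))).
    by rewrite !natrD !natrM; ring.
  by rewrite c_eq0 w2D !mul0r subr0.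
move/eqP; rewrite eqr_nat => /eqP.
by case: (leqP c0 c1); case: (leqP c1 c2); case: (leqP c0 c2); nia.
Qed.

Section PolynomialsInX3.
Variable R : nzRingType.

Definition poly_in_X3 (p : {poly R}) := forall j, (j %% 3 != 0)%N -> p`_j = 0.

Lemma poly_in_X31 : poly_in_X3 1.
Proof. by move=> [|j] //; rewrite coef1. Qed.

Lemma poly_in_X3M p q : poly_in_X3 p -> poly_in_X3 q -> poly_in_X3 (p * q).
Proof.
move=> p3 q3 j j3; rewrite coefM; apply: big1 => -[i lt_ij] _ /=.
have [i3 | /negPn i3] := boolP (i %% 3 != 0)%N; first by rewrite p3 ?mul0r.
by rewrite q3 ?mulr0 //; move: i3 j3 lt_ij; rewrite ltnS; lia.
Qed.

Lemma poly_in_X3_prod I (s : seq I) (P : pred I) (F : I -> {poly R}) :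
  (forall i, P i -> poly_in_X3 (F i)) -> poly_in_X3 (\prod_(i <- s | P i) F i).
Proof.
by move=> F3; apply: (big_ind poly_in_X3) => //; [exact: poly_in_X31 | exact: poly_in_X3M].
Qed.

Lemma poly_in_X3_ovser N k : poly_in_X3 (ovser N ('X^(3 * k))).
Proof.
move=> j j3; rewrite coef_sum big1 // => a _.
by rewrite -exprM coefMn coefXn; case: eqP => [def_j | _]; rewrite ?mul0rn //; lia.
Qed.

Lemma sqr_mod3 d : (d ^ 2 %% 3 != 2)%N.
Proof. by rewrite -modnXm; case: (d %% 3)%N (ltn_pmod d (isT : 0 < 3)%N) => [|[|[|]]]. Qed.

Lemma coef_theta_mul_in_X3 r N (p : {poly R}) :
  (N %% 3 = 2)%N -> poly_in_X3 p -> (theta R r * p)`_N = 0.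
Proof.
move=> N2 p3; rewrite coefM; apply: big1 => -[i lt_iN] _ /=.
have [i3 | /negPn Ni3] := boolP ((N - i) %% 3 != 0)%N; first by rewrite p3 ?mulr0.
rewrite coef_sum big1 ?mul0r // => k _; rewrite coefXn.
case: eqP => // def_i; have := sqr_mod3 `|k - r|; rewrite -def_i.
by move: Ni3 lt_iN; rewrite ltnS; lia.
Qed.

End PolynomialsInX3.

Lemma exists_cube_root_unity : exists w : algC, w ^+ 2 + w + 1 = 0.
Proof.
have [w ww] := @solve_monicpoly algC 2 (fun _ => -1) isT.
by exists w; rewrite ww !big_ord_recr big_ord0 /= add0r expr0 expr1; ring.
Qed.

Lemma Cbar_eq_mod3 N : (N %% 3 = 2)%N ->
  Cbar 0 3 N = Cbar 1 3 N /\ Cbar 1 3 N = Cbar 2 3 N.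
Proof.
move=> N2; have [w w2D] := exists_cube_root_unity.
apply: (cube_root_nat_comb_eq w2D).
have := sum_crank_weight_Cbar N (cube_root_expr3 w2D).
rewrite !big_ord_recr big_ord0 /= add0r expr0 expr1 mulr1 => <-.
rewrite crank_gf_coef; have /eqmodXP -> // := eqmodX_crank_gf_theta w2D N.
apply: coef_theta_mul_in_X3 => //; apply: poly_in_X3_prod => i _.
by rewrite /cube_factor; case: (odd i); [exact: poly_in_X3_ovser | exact: poly_in_X31].
Qed.

Definition cong1_mod2 (R : nzRingType) (p : {poly R}) := exists h, p = 1 + h *+ 2.

Lemma cong1_mod2M (R : comNzRingType) (p q : {poly R}) :
  cong1_mod2 p -> cong1_mod2 q -> cong1_mod2 (p * q).
Proof. by move=> [a ->] [b ->]; exists (a + b + a * b *+ 2); ring. Qed.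

Lemma cong1_mod2_ovser (R : nzRingType) N (u : {poly R}) : cong1_mod2 (ovser N u).
Proof.
exists (\sum_(a < N) u ^+ a.+1).
by rewrite /ovser big_ord_recl /= mulr1n -sumrMnl.
Qed.

Lemma abar_even N : (0 < N)%N -> (2 %| abar N)%N.
Proof.
move=> N_gt0; have := crank_gf_coef N (1 : int).
have [h ->] : cong1_mod2 (\prod_(i < N) crank_factor (1 : int) N i).
  apply: (big_ind (@cong1_mod2 _)) => [|p q|i _]; first by exists 0; rewrite mul0rn addr0.
    exact: cong1_mod2M.
  by apply: cong1_mod2M; apply: cong1_mod2_ovser.
under eq_bigr do rewrite expr1n.
rewrite sumr_overcubic_const coefD coef1 coefMn gtn_eqF // add0r.
by lia.
Qed.

Theorem theorem3p2 (n : nat) :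
  [/\ Cbar 0 3 (3 * n + 2) = Cbar 1 3 (3 * n + 2),
      Cbar 1 3 (3 * n + 2) = Cbar 2 3 (3 * n + 2),
      (3 %| abar (3 * n + 2))%N,
      Cbar 2 3 (3 * n + 2) = (abar (3 * n + 2) %/ 3)%N
    & (2 %| abar (3 * n + 2) %/ 3)%N].
Proof.
set N := (3 * n + 2)%N.
have N2 : (N %% 3 = 2)%N by rewrite /N; lia.
have [C01 C12] := Cbar_eq_mod3 N2.
have abarE : abar N = (3 * Cbar 2 3 N)%N by rewrite abar_Cbar C01 C12; lia.
have abar2 : (2 %| abar N)%N by apply: abar_even; rewrite /N addn2.
rewrite abarE mulKn // in abar2 *.
by split; rewrite // ?dvdn_mulr //; move: abar2; lia.
Qed.
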